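(* Suppose that for every $t\in\mathcal{T}$, $Y^*(t)$ is conditionally independent of $T$ given $\boldsymbol{X}$ (unconfoundedness), that $f_{T|X}(t|\boldsymbol{x})>0$ on $\mathcal{T}\times\mathcal{X}$, and that the minimizers below exist and are unique. Then for every $t\in\mathcal{T}$, $$g(t)=\arg\min_{a\in\mathbb{R}}\mathbb{E}\big[\pi(T,\boldsymbol{X})\,\mathcal{L}(Y-a)\,\big|\,T=t\big],\qquad \pi(t,\boldsymbol{x}):=\frac{f_T(t)}{f_{T|X}(t|\boldsymbol{x})}.$$
   Context: $T$ is a continuous treatment with support $\mathcal{T}\subset\mathbb{R}$ and density $f_T$; $\boldsymbol{X}\in\mathcal{X}\subset\mathbb{R}^{d_X}$ are covariates with density $f_X$; $f_{T|X}$ is the conditional density of $T$ given $\boldsymbol{X}$; $\{Y^*(t):t\in\mathcal{T}\}$ are potential outcomes and $Y=Y^*(T)$ is the observed outcome. $\mathcal{L}:\mathbb{R}\to[0,\infty)$ is a strictly convex loss with $\mathcal{L}(0)=0$. The general dose-response function is $g(t):=\arg\min_{a\in\mathbb{R}}\mathbb{E}[\mathcal{L}(Y^*(t)-a)]$. *)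

From HB Require Import structures.
From mathcomp Require Import all_boot all_order all_algebra.
From mathcomp Require Import all_classical all_reals all_analysis.
From mathcomp Require Import measurable_realfun.
Set Implicit Arguments. Unset Strict Implicit. Unset Printing Implicit Defensive.
Import Order.TTheory GRing.Theory Num.Theory.
Local Open Scope classical_set_scope.
Local Open Scope ring_scope.
Local Open Scope ereal_scope.

Definition strictly_convex (R : realType) (L : R -> R) : Prop :=
  forall (x y l : R), x != y -> (0 < l)%R -> (l < 1)%R ->
    (L (l * x + (1 - l) * y) < l * L x + (1 - l) * L y)%R.

Definition is_unique_argmin (R : realType) (F : R -> \bar R) (m : R) : Prop :=
  (forall a, F m <= F a) /\ (forall b, (forall a, F b <= F a) -> b = m).

(* The joint law of (X, T, Y^*(t)) is specified by the density fX of X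
   (w.r.t. the reference measure nu on the covariate space), the conditional
   density fTX s x = f_{T|X}(s|x) (w.r.t. Lebesgue measure), and the
   conditional law  K t s x  of Y^*(t) given (T = s, X = x).
   potential_expect ... t phi = E[ phi(T, X, Y^*(t)) ]. *)
Definition potential_expect (R : realType) (dX : measure_display)
  (XT : measurableType dX) (nu : {measure set XT -> \bar R})
  (Tset : set R) (Xset : set XT) (fX : XT -> R) (fTX : R -> XT -> R)
  (K : R -> R -> XT -> probability R R) (t : R) (phi : R -> XT -> R -> R)
  : \bar R :=
  \int[nu]_(x in Xset) ((fX x)%:E *
     \int[lebesgue_measure]_(s in Tset) ((fTX s x)%:E *
        \int[K t s x]_y (phi s x y)%:E)).

(* Conditional expectation of psi(T, X, Y), Y = Y^*(T) the observed outcome,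
   given T = t, computed with the conditional density of X given T = t,
   f_{X|T}(x|t) = f_{T|X}(t|x) fX(x) / fT(t), and the conditional law of Y
   given (T = t, X = x), which is the law of Y^*(t) given (T = t, X = x). *)
Definition cond_expect_T (R : realType) (dX : measure_display)
  (XT : measurableType dX) (nu : {measure set XT -> \bar R})
  (Xset : set XT) (fX : XT -> R) (fTX : R -> XT -> R) (fT : R -> R)
  (K : R -> R -> XT -> probability R R) (t : R) (psi : R -> XT -> R -> R)
  : \bar R :=
  \int[nu]_(x in Xset) ((fTX t x * fX x / fT t)%:E *
     \int[K t t x]_y (psi t x y)%:E).

Definition ipw (R : realType) (XT : Type) (fT : R -> R) (fTX : R -> XT -> R)
  (t : R) (x : XT) : R := (fT t / fTX t x)%R.

From HB Require Import structures.
From mathcomp Require Import all_boot all_order all_algebra.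
From mathcomp Require Import all_classical all_reals all_analysis.
From mathcomp Require Import measurable_realfun.
From mathcomp Require Import ring.
Set Implicit Arguments.
Unset Strict Implicit.
Import Order.TTheory GRing.Theory Num.Theory.
Local Open Scope classical_set_scope.
Local Open Scope ring_scope.

(* Under unconfoundedness the law of Y^*(t) given (T = s, X = x) does not
   depend on s, so averaging it against the density of T given X = x returns
   the law at s = t; the weight pi(t, x) = f_T(t) / f_{T|X}(t|x) exactly turns
   the conditional density of X given T = t back into the density of X.
   Hence the weighted conditional risk and the potential risk are the same
   function of a, and so have the same unique minimiser. *)

Lemma strictly_convex_comp_opp (R : realType) (L : R -> R) :
  strictly_convex L -> strictly_convex (fun u => L (- u)).
Proof.
move=> hL x y l xy l0 l1; rewrite opprD -!mulrN.
by apply: hL => //; rewrite eqr_opp.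
Qed.

Section Loss.
Variables (R : realType) (L : R -> R).
Hypotheses (hL0 : L 0 = 0) (hLpos : forall u, 0 <= L u)
  (hLconv : strictly_convex L).

Lemma loss_nondecreasing_ge0 x y : 0 <= x -> x <= y -> L x <= L y.
Proof.
move=> x0 xy; have [->|xy'] := eqVneq x y; first by [].
have [->|x0'] := eqVneq x 0; first by rewrite hL0.
have y0 : 0 < y by rewrite (lt_le_trans _ xy)// lt_neqAle eq_sym x0' x0.
have l0 : 0 < x / y by rewrite divr_gt0// lt_neqAle eq_sym x0' x0.
have l1 : x / y < 1 by rewrite ltr_pdivrMr// mul1r lt_neqAle xy' xy.
(* x is the convex combination (x / y) * y + (1 - x / y) * 0 *)
have := hLconv (y := 0) (lt0r_neq0 y0) l0 l1.
rewrite mulr0 addr0 hL0 mulr0 addr0 mulrAC -mulrA divff ?mulr1 ?lt0r_neq0//.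
move=> /ltW/le_trans; apply.
by rewrite -[leRHS]mul1r ler_wpM2r// ltW.
Qed.

End Loss.

Lemma loss_nonincreasing_le0 (R : realType) (L : R -> R) :
  L 0 = 0 -> (forall u, 0 <= L u) -> strictly_convex L ->
  forall x y, x <= 0 -> y <= x -> L x <= L y.
Proof.
move=> hL0 hLpos hLconv x y x0 yx.
have := @loss_nondecreasing_ge0 _ (fun u => L (- u)) _ _
  (strictly_convex_comp_opp hLconv) (- x) (- y).
by rewrite !opprK oppr0 oppr_ge0 lerN2; apply.
Qed.

Lemma loss_measurable (R : realType) (L : R -> R) :
  L 0 = 0 -> (forall u, 0 <= L u) -> strictly_convex L ->
  measurable_fun setT L.
Proof.
move=> hL0 hLpos hLconv.
have -> : L = (fun u => L (Num.max u 0) + L (Num.min u 0)).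
  by apply/funext => u; have [u0|u0] := leP u 0; rewrite hL0 ?add0r ?addr0.
apply: measurable_funD.
  apply: nondecreasing_measurable => // a b ab.
  apply: (loss_nondecreasing_ge0 hL0) => //; first by rewrite le_max lexx orbT.
  by rewrite ge_max !le_max ab lexx /= orbT.
apply: nonincreasing_measurable => // a b ab.
apply: (loss_nonincreasing_le0 hL0) => //; first by rewrite ge_min lexx orbT.
by rewrite le_min !ge_min ab lexx /= orbT.
Qed.

Local Open Scope ereal_scope.

Lemma constant_not_unique_argmin (R : realType) (F : R -> \bar R) (m : R) :
  (forall a b, F a = F b) -> ~ is_unique_argmin F m.
Proof.
move=> Fcst [_ hm]; have Fmin b a : F b <= F a by rewrite (Fcst b a).
by have := hm 1%R (Fmin 1%R); rewrite -(hm 0%R (Fmin 0%R)) => /eqP; rewrite oner_eq0.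
Qed.

Section InverseProbabilityWeighting.
Variables (R : realType) (dX : measure_display) (XT : measurableType dX).
Variables (nu : {measure set XT -> \bar R}) (Tset : set R) (Xset : set XT).
Variables (fX : XT -> R) (fTX : R -> XT -> R) (fT : R -> R).
Variable (K : R -> R -> XT -> probability R R).
Hypotheses (mTset : measurable Tset) (fX_ge0 : forall x, (0 <= fX x)%R)
  (fTX_ge0 : forall s x, (0 <= fTX s x)%R)
  (fTX_meas : measurable_fun setT (fun p : R * XT => fTX p.1 p.2))
  (fTX_int1 : forall x, Xset x ->
     \int[lebesgue_measure]_(s in Tset) (fTX s x)%:E = 1)
  (fT_marg : forall t, Tset t ->
     (fT t)%:E = \int[nu]_(x in Xset) (fTX t x * fX x)%:E)
  (hunconf : forall t s s' x (A : set R), Tset t -> Tset s -> Tset s' ->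
     Xset x -> measurable A -> K t s x A = K t s' x A)
  (hpos : forall t x, Tset t -> Xset x -> (0 < fTX t x)%R).

Lemma marginal_density_ge0 t : Tset t -> (0 <= fT t)%R.
Proof.
move=> Tt; rewrite -lee_fin fT_marg//.
by apply: integral_ge0 => x _; rewrite lee_fin mulr_ge0.
Qed.

Lemma cond_expect_T_ipw_fT0 t psi : fT t = 0%R ->
  cond_expect_T nu Xset fX fTX fT K t
    (fun s x y => ipw fT fTX s x * psi s x y)%R = 0.
Proof.
move=> fT0; rewrite /cond_expect_T fT0 invr0.
under eq_integral do rewrite mulr0 mul0e.
by rewrite integral0.
Qed.

Lemma integral_cond_density_unconfounded t x (h : R -> \bar R) :
  Tset t -> Xset x -> measurable_fun setT h -> (forall y, 0 <= h y) ->
  \int[lebesgue_measure]_(s in Tset) ((fTX s x)%:E * \int[K t s x]_y h y)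
  = \int[K t t x]_y h y.
Proof.
move=> Tt Xx mh h0.
transitivity (\int[lebesgue_measure]_(s in Tset)
    ((fTX s x)%:E * \int[K t t x]_y h y)).
  apply: eq_integral => s /set_mem Ts; congr (_ * _).
  by apply: eq_measure_integral => A mA _; exact: hunconf.
rewrite ge0_integralZr//; first by rewrite fTX_int1// mul1e.
- apply/measurable_EFinP; apply: (measurable_funS measurableT) => //.
  exact: (measurable_fun_pair1 x fTX_meas).
- by move=> s _; rewrite lee_fin.
- exact: integral_ge0.
Qed.

Lemma ipw_cond_expect_T_potential_expect t (h : R -> R) :
  Tset t -> (0 < fT t)%R -> measurable_fun setT h -> (forall y, 0 <= h y)%R ->
  cond_expect_T nu Xset fX fTX fT K t (fun s x y => ipw fT fTX s x * h y)%R
  = potential_expect nu Tset Xset fX fTX K t (fun _ _ y => h y).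
Proof.
move=> Tt fTt mh h0; rewrite /cond_expect_T /potential_expect.
apply: eq_integral => x /set_mem Xx.
have fTXt := hpos Tt Xx.
under [X in _ * X = _]eq_integral do rewrite EFinM.
rewrite ge0_integralZl_EFin//; last 3 first.
- by move=> y _; rewrite lee_fin.
- exact/measurable_EFinP.
- by rewrite divr_ge0// ltW.
rewrite muleA -EFinM integral_cond_density_unconfounded//; last first.
  exact/measurable_EFinP.
congr (_ * _); congr (_%:E).
by rewrite /ipw; field; rewrite !lt0r_neq0.
Qed.

End InverseProbabilityWeighting.

Unset Implicit Arguments.

Theorem mainTheorem1 (R : realType) (dX : measure_display)
  (XT : measurableType dX) (nu : {measure set XT -> \bar R})
  (Tset : set R) (Xset : set XT)
  (fX : XT -> R) (fTX : R -> XT -> R) (fT : R -> R)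
  (K : R -> R -> XT -> probability R R)
  (L : R -> R) (g : R -> R)
  (hL0 : (L 0 = 0)%R) (hLpos : forall u, (0 <= L u)%R)
  (hLconv : strictly_convex L)
  (mTset : measurable Tset) (mXset : measurable Xset)
  (fX_ge0 : forall x, (0 <= fX x)%R)
  (fX_meas : measurable_fun setT fX)
  (fX_int1 : \int[nu]_(x in Xset) (fX x)%:E = 1)
  (fTX_ge0 : forall s x, (0 <= fTX s x)%R)
  (fTX_meas : measurable_fun setT (fun p : R * XT => fTX p.1 p.2))
  (fTX_int1 : forall x, Xset x ->
     \int[lebesgue_measure]_(s in Tset) (fTX s x)%:E = 1)
  (fT_marg : forall t, Tset t ->
     (fT t)%:E = \int[nu]_(x in Xset) (fTX t x * fX x)%:E)
  (K_meas : forall (t : R) (A : set R), measurable A ->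
     measurable_fun setT (fun p : R * XT => K t p.1 p.2 A))
  (hunconf : forall t s s' x (A : set R), Tset t -> Tset s -> Tset s' ->
     Xset x -> measurable A -> K t s x A = K t s' x A)
  (hpos : forall t x, Tset t -> Xset x -> (0 < fTX t x)%R)
  (hg : forall t, Tset t ->
     is_unique_argmin
       (fun a : R => potential_expect nu Tset Xset fX fTX K t
                   (fun _ _ y => (L (y - a))%R)) (g t))
  (hmin : forall t, Tset t -> exists m,
     is_unique_argmin
       (fun a : R => cond_expect_T nu Xset fX fTX fT K t
                   (fun s x y => ipw fT fTX s x * L (y - a))%R) m) :
  forall t, Tset t ->
    is_unique_argmin
      (fun a : R => cond_expect_T nu Xset fX fTX fT K t
                  (fun s x y => ipw fT fTX s x * L (y - a))%R) (g t).
Proof.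
move=> t Tt.
have [m hm] := hmin t Tt.
(* with f_T(t) = 0 the weights vanish (x / 0 = 0) and the minimiser is not unique *)
have fTt : (0 < fT t)%R.
  rewrite lt_neqAle (marginal_density_ge0 fX_ge0 fTX_ge0 fT_marg Tt) andbT.
  apply/negP => /eqP/esym fT0; apply: (constant_not_unique_argmin _ hm) => a b.
  by rewrite !cond_expect_T_ipw_fT0.
suff -> : (fun a : R => cond_expect_T nu Xset fX fTX fT K t
            (fun s x y => ipw fT fTX s x * L (y - a))%R)
        = (fun a : R => potential_expect nu Tset Xset fX fTX K t
            (fun _ _ y => L (y - a))%R) by exact: hg.
have mL := loss_measurable hL0 hLpos hLconv.
apply/funext => a; apply: ipw_cond_expect_T_potential_expect => //.
by apply: measurableT_comp mL _; apply: measurable_funB.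
Qed.
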